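(* Let $n\ge2$, $\kappa>0$, and let $\tilde\theta:\mathbb R\to[0,\infty)$ be locally Lipschitz and nondecreasing with $\tilde\theta(s)=0$ for $s\le 0$ and $\tilde\theta(s)>0$ for $s>0$; set $\theta(a,b)=\tilde\theta(\min(a,b))$. Let $1\le m<n$ and let $\rho:[0,\infty)\to\mathbb R^n$ be the solution of $$\frac{d\rho_j}{dt}=\kappa\sum_{k=1}^n\theta(\rho_j,\rho_k)(\rho_j-\rho_k),\qquad j=1,\dots,n,$$ with $\rho(0)\in\mathcal P$ satisfying $\rho_1(0)=\dots=\rho_m(0)>\rho_{m+1}(0)\ge\dots\ge\rho_n(0)$. Then $\rho_1(t)=\rho_2(t)=\dots=\rho_m(t)$ for all $t\ge0$, and $$\rho_1(t)-\max_{m<j\le n}\rho_j(t)\ \ge\ \rho_1(0)-\max_{m<j\le n}\rho_j(0)\qquad\forall t\ge0.$$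
   Context: $\mathcal P=\{\rho\in\mathbb R^n:\rho_i\ge0\ \forall i,\ \sum_{i=1}^n\rho_i=1\}$ denotes the probability simplex. *)

From HB Require Import structures.
From mathcomp Require Import all_boot all_order all_algebra.
From mathcomp Require Import all_classical all_reals all_analysis.
Set Implicit Arguments. Unset Strict Implicit. Unset Printing Implicit Defensive.
Import Order.TTheory GRing.Theory Num.Theory.
Import numFieldNormedType.Exports.
Local Open Scope classical_set_scope.
Local Open Scope ring_scope.

Definition in_simplex (R : realType) (n : nat) (x : 'I_n -> R) : Prop :=
  (forall i, 0 <= x i) /\ \sum_(i < n) x i = 1.

Definition loc_lipschitz (R : realType) (f : R -> R) : Prop :=
  forall x : R, exists delta : R, exists L : R, 0 < delta /\
    forall y z : R, `|y - x| < delta -> `|z - x| < delta ->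
      `|f y - f z| <= L * `|y - z|.

Definition theta (R : realType) (tth : R -> R) (a b : R) : R := tth (Num.min a b).

(* max_{m < j <= n} x_j  (0-based: indices j with m <= j < n); the seed
   x_m belongs to the index set, so this is exactly the maximum. *)
Definition tailmax (R : realType) (n m : nat) (hmn : (m < n)%N) (x : 'I_n -> R) : R :=
  \big[Num.max/x (Ordinal hmn)]_(j : 'I_n | (m <= j)%N) x j.

From HB Require Import structures.
From mathcomp Require Import all_boot all_order all_algebra.
From mathcomp Require Import all_classical all_reals all_analysis.
From mathcomp Require Import ring lra.
Set Implicit Arguments. Unset Strict Implicit. Unset Printing Implicit Defensive.
Import Order.TTheory GRing.Theory Num.Theory.
Import numFieldNormedType.Exports.
Local Open Scope classical_set_scope.
Local Open Scope ring_scope.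

(* Both claims say that the configuration "cluster coordinates equal, every
   tail coordinate at least [gap] below them" persists, with [gap] the initial
   separation.  It is encoded by pair defects that are nonpositive exactly on
   that configuration.  On [0, T] the weights theta are bounded by some B, and
   if all defects are at most p > 0 with one of them equal to p, comparing the
   drifts term by term bounds the growth rate of that defect by K p, where
   K = 2 n kappa B.  So no defect can reach the barrier e exp((K + 1)(t - T)),
   and letting e -> 0 gives the invariance. *)

Section RealFacts.
Variable R : realType.

Lemma le0_of_lt_small (x D : R) :
  0 < D -> (forall e, 0 < e -> e <= D -> x < e) -> x <= 0.
Proof.
move=> D0 small; apply/ler_addgt0Pr => z z0; rewrite add0r.
have minz : Num.min z D <= z by rewrite ge_min lexx.
have minD : Num.min z D <= D by rewrite ge_min lexx orbT.
have : 0 < Num.min z D by rewrite lt_min z0 D0.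
by move/small/(_ minD)/ltW/le_trans; apply.
Qed.

Lemma mul_le_bound (c d B e : R) : 0 <= c -> c <= B -> `|d| <= e -> c * d <= B * e.
Proof.
move=> c0 cB de; apply: le_trans (ler_wpM2l c0 (ler_norm d)) _.
exact: ler_pM.
Qed.

Lemma is_derive_ge0_at_first_zero (g : R -> R) (s d : R) :
  0 < s -> is_derive s 1 g d -> g s = 0 ->
  (forall t, 0 <= t -> t < s -> g t < 0) -> 0 <= d.
Proof.
move=> s0 [/cvg_ex [l dq] dl] gs neg; rewrite leNgt; apply/negP => d0.
have ld : l = d by rewrite -dl /derive (cvg_lim _ dq).
subst l.
(* A negative derivative would make the left difference quotients
   g (s + h) / h, h < 0, negative, i.e. g (s + h) > 0. *)
have : \forall h \near (0 : R)^'-, [/\ h^-1 * g (h + s) < 0, - s < h & h < 0].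
  near=> h; split; near: h.
  - have := @cvgr_lt _ _ (0^' : set_system R) ltac:(typeclasses eauto) _ _ dq _ d0.
    rewrite !near_withinE.
    apply: filterS => h qh /ltr0_neq0 /qh.
    by rewrite /= gs subr0 /GRing.scale /= mulr1.
  - by apply: nbhs_left_gt; rewrite oppr_lt0.
  - exact: nbhs_left_lt.
move=> /filter_ex [h [+ sh h0]]; rewrite nmulr_rlt0 ?invr_lt0 // => gpos.
have := neg (h + s); lra.
Unshelve. all: by end_near.
Qed.

Lemma is_derive_scaled_expR (e L T s : R) :
  is_derive s 1 (fun t => e * expR (L * (t - T))) (e * expR (L * (s - T)) * L).
Proof.
have lin : is_derive s 1 (fun t : R => L * (t - T)) L.
  apply: is_derive_eq (is_deriveZ L (is_deriveB (is_derive_id s 1) (is_derive_cst T s 1))) _.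
  by rewrite subr0 /GRing.scale /= mulr1.
apply: is_derive_eq (is_deriveZ e (is_derive1_comp (is_derive_expR _) lin)) _.
by rewrite /GRing.scale /= mulrA.
Qed.

Lemma le0_at_first_zero (f : R -> R) (s : R) :
  0 < s -> {within [set t | 0 <= t], continuous f} ->
  (forall t, 0 <= t -> t < s -> f t < 0) -> f s <= 0.
Proof.
move=> s0 fc neg; rewrite leNgt; apply/negP => fs0.
have fpos : \forall t \near s, 0 <= t -> 0 < f t.
  have := (subspace_continuousP _ _).1 fc s (ltW s0).
  by move/cvgr_gt/(_ _ fs0); rewrite near_withinE.
have : \forall t \near s^'-, [/\ 0 < t, t < s & (0 <= t -> 0 < f t)].
  near=> t; split; near: t; first exact: nbhs_left_gt.
    exact: nbhs_left_lt.
  by rewrite near_withinE; apply: filterS fpos => t + _.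
move=> /filter_ex [t [t0 ts /(_ (ltW t0))]]; have := neg t (ltW t0) ts; lra.
Unshelve. all: by end_near.
Qed.

Lemma first_nonneg_time (I : finType) (P : {pred I}) (g : I -> R -> R) (T : R) :
  (forall i, P i -> {within [set t | 0 <= t], continuous (g i)}) ->
  (forall i, P i -> g i 0 < 0) -> (exists2 i, P i & 0 <= g i T) -> 0 <= T ->
  exists s, [/\ 0 < s, s <= T, exists2 i, P i & g i s = 0,
    forall i, P i -> g i s <= 0 & forall i t, P i -> 0 <= t -> t < s -> g i t < 0].
Proof.
move=> gc g0 [i0 Pi0 gi0T] T0.
pose S := [set t : R | 0 <= t /\ exists2 i, P i & 0 <= g i t].
have ST : S T by split => //; exists i0.
have lbS : lbound S 0 by move=> x [].
have hlbS : has_lbound S by exists 0.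
set s := inf S.
have s0 : 0 <= s by apply: lb_le_inf => //; exists T.
have sT : s <= T by apply: ge_inf.
have before i t : P i -> 0 <= t -> t < s -> g i t < 0.
  move=> Pi t0 ts; rewrite ltNge; apply/negP => git.
  have : s <= t by apply: ge_inf => //; split => //; exists i.
  by rewrite leNgt ts.
have [i1 Pi1 gi1s] : exists2 i, P i & 0 <= g i s.
  (* Otherwise every [g i] stays negative near [s], which contradicts [s = inf S]. *)
  apply: contrapT => none.
  have near_neg i : \forall t \near s, 0 <= t -> P i -> g i t < 0.
    have [Pi|nPi] := boolP (P i); last by near=> t.
    have gis : g i s < 0 by rewrite ltNge; apply/negP => gis; apply: none; exists i.
    have := (subspace_continuousP _ _).1 (gc i Pi) s s0.
    by move/cvgr_lt/(_ _ gis); rewrite near_withinE; apply: filterS => t + t0 _; apply.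
  have [d /= d0 near_s] := (nbhs_ballP _ _).1 (filter_forall _ near_neg).
  have [x Sx xs] := inf_adherent d0 (conj (ex_intro _ T ST) hlbS).
  have sx : s <= x by apply: ge_inf.
  case: Sx => x0 [i Pi gix].
  have : ball s d x by rewrite /ball /= ler0_norm ?subr_le0 //; lra.
  by move/near_s/(_ i x0 Pi); lra.
have s_gt0 : 0 < s.
  rewrite lt_neqAle s0 andbT; apply/eqP => s_eq0.
  by move: (g0 i1 Pi1); rewrite s_eq0; lra.
have le0 i : P i -> g i s <= 0.
  by move=> Pi; apply: le0_at_first_zero (gc _ Pi) _ => // t; exact: before.
exists s; split => //; exists i1 => //.
by apply/eqP; rewrite eq_le gi1s le0.
Unshelve. all: by end_near.
Qed.

Lemma barrier_lt0 (I : finType) (P : {pred I}) (g : I -> R -> R) (T : R) :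
  0 <= T ->
  (forall i, P i -> {within [set t | 0 <= t], continuous (g i)}) ->
  (forall i, P i -> g i 0 < 0) ->
  (forall s i, 0 < s -> s <= T -> (forall j, P j -> g j s <= 0) -> P i -> g i s = 0 ->
     exists2 d, is_derive s 1 (g i) d & d < 0) ->
  forall i, P i -> g i T < 0.
Proof.
move=> T0 gc g0 escape i Pi; rewrite ltNge; apply/negP => giT.
have [s [s0 sT [j Pj gjs] le0 before]] :=
  first_nonneg_time gc g0 (ex_intro2 _ _ i Pi giT) T0.
have [d gd d0] := escape s j s0 sT le0 Pj gjs.
have := is_derive_ge0_at_first_zero s0 gd gjs (fun t => before j t Pj); lra.
Qed.

Lemma bounded_on_segment (I : finType) (f : I -> R -> R) (T : R) :
  0 <= T -> (forall i, {within [set t | 0 <= t], continuous (f i)}) ->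
  exists M, forall i t, 0 <= t -> t <= T -> f i t <= M.
Proof.
move=> T0 fc.
have bound i : exists Mi, forall t, 0 <= t -> t <= T -> f i t <= Mi.
  have fci : {within `[0, T], continuous (f i)}.
    move: (fc i); apply: continuous_subspaceW => t.
    by rewrite /= in_itv /= => /andP[].
  have [c _ fc_max] := EVT_max T0 fci.
  by exists (f i c) => t t0 tT; apply: fc_max; rewrite in_itv /= t0 tT.
have [M fM] := fin_all_exists bound.
exists (\big[Num.max/0]_i M i) => i t t0 tT.
by apply: le_trans (fM i t t0 tT) _; exact: le_bigmax.
Qed.
End RealFacts.

Definition drift (R : realType) (n : nat) (kappa : R) (tth : R -> R)
    (x : 'I_n -> R) (j : 'I_n) : R :=
  kappa * \sum_(k < n) theta tth (x j) (x k) * (x j - x k).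

Section DriftComparison.
Variables (R : realType) (n m : nat) (kappa : R) (tth : R -> R).
Hypotheses (kappa_ge0 : 0 <= kappa) (tth_ge0 : forall s, 0 <= tth s)
  (tth_mono : {homo tth : x y / x <= y}).
Variables (x : 'I_n -> R) (B e : R).
Hypotheses (tth_le : forall j, tth (x j) <= B)
  (cluster_close : forall a b : 'I_n, (a < m)%N -> (b < m)%N -> x a - x b <= e)
  (tail_below : forall a k : 'I_n, (a < m)%N -> (m <= k)%N -> x k <= x a).

Let cluster_norm (a b : 'I_n) : (a < m)%N -> (b < m)%N -> `|x a - x b| <= e.
Proof.
by move=> am bm; rewrite ler_norml lerNl opprB !cluster_close.
Qed.

Let theta_mul_le (j k : 'I_n) (u : R) :
  `|u| <= e -> theta tth (x j) (x k) * u <= B * e.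
Proof.
apply: mul_le_bound (tth_ge0 _) _.
by apply: le_trans (tth_le j); apply: tth_mono; rewrite ge_min lexx.
Qed.

Let theta_tail (a k : 'I_n) :
  (a < m)%N -> (m <= k)%N -> theta tth (x a) (x k) = tth (x k).
Proof. by move=> am km; rewrite /theta min_r // tail_below. Qed.

Let Be_ge0 (a : 'I_n) : (a < m)%N -> 0 <= B * e.
Proof.
move=> am; apply: mulr_ge0; first exact: le_trans (tth_ge0 _) (tth_le a).
by rewrite -(subrr (x a)) cluster_close.
Qed.

Let drift_sub_le (a b : 'I_n) (c : R) :
  (forall k : 'I_n, theta tth (x a) (x k) * (x a - x k)
                    - theta tth (x b) (x k) * (x b - x k) <= c) ->
  drift kappa tth x a - drift kappa tth x b <= kappa * c *+ n.
Proof.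
move=> term_le; rewrite /drift -mulrBr -sumrB -mulrnAr.
apply: (ler_wpM2l kappa_ge0); rewrite -[n in _ *+ n]card_ord -sumr_const.
by apply: ler_sum => k _.
Qed.

Lemma drift_sub_cluster_le (a b : 'I_n) : (a < m)%N -> (b < m)%N ->
  drift kappa tth x a - drift kappa tth x b <= kappa * (2 * B * e) *+ n.
Proof.
move=> am bm; apply: drift_sub_le => k.
have Be0 := Be_ge0 am.
case: (ltnP k m) => km.
  have := theta_mul_le a k (cluster_norm am km).
  have := theta_mul_le b k (cluster_norm km bm); rewrite -opprB mulrN; lra.
rewrite !theta_tail // -mulrBr.
have := mul_le_bound (tth_ge0 (x k)) (tth_le k) (cluster_norm am bm); lra.
Qed.

Lemma drift_sub_gap_le (a b : 'I_n) : (a < m)%N -> (m <= b)%N ->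
  (forall k : 'I_n, (m <= k)%N -> x k <= x b) ->
  drift kappa tth x b - drift kappa tth x a <= kappa * (2 * B * e) *+ n.
Proof.
move=> am bm tail_max; apply: drift_sub_le => k.
have Be0 := Be_ge0 am.
have ba := tail_below am bm.
case: (ltnP k m) => km.
  have bk := tail_below km bm.
  rewrite /theta (min_l bk).
  have := theta_mul_le a k (cluster_norm km am); rewrite -opprB mulrN /theta.
  have : tth (x b) * (x b - x k) <= 0 by rewrite mulr_ge0_le0 // subr_le0.
  lra.
rewrite /theta (min_r (tail_max k km)) (min_r (tail_below am km)) -mulrBr.
have : tth (x k) * (x b - x a) <= 0 by rewrite mulr_ge0_le0 // subr_le0.
lra.
Qed.

End DriftComparison.

Section ClusterInvariance.
Variables (R : realType) (n m : nat) (kappa : R) (tth : R -> R)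
  (rho : R -> 'I_n -> R) (gap : R).
Hypotheses (kappa_gt0 : 0 < kappa) (tth_ge0 : forall s, 0 <= tth s)
  (tth_mono : {homo tth : x y / x <= y}) (gap_gt0 : 0 < gap)
  (rho_cont : forall j, {within [set t | 0 <= t], continuous (fun t => rho t j)})
  (rho_ode : forall t : R, 0 < t -> forall j,
     is_derive t 1 (fun s => rho s j) (drift kappa tth (rho t) j)).

(* For [a] in the cluster ([a < m]), [pair_defect x a b <= 0] means
   [x a <= x b] if [b] is in the cluster and [gap <= x a - x b] otherwise. *)
Definition pair_defect (x : 'I_n -> R) (a b : 'I_n) : R :=
  if (b < m)%N then x a - x b else gap - (x a - x b).

Definition pair_defect_drift (x : 'I_n -> R) (a b : 'I_n) : R :=
  if (b < m)%N then drift kappa tth x a - drift kappa tth x b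
  else drift kappa tth x b - drift kappa tth x a.

Lemma continuous_pair_defect (a b : 'I_n) :
  {within [set t | 0 <= t], continuous (fun t => pair_defect (rho t) a b)}.
Proof.
apply/subspace_continuousP => t t0.
have ca := (subspace_continuousP _ _).1 (@rho_cont a) t t0.
have cb := (subspace_continuousP _ _).1 (@rho_cont b) t t0.
rewrite /pair_defect; case: (b < m)%N; first exact: cvgB.
by apply: cvgB; [exact: cvg_cst | exact: cvgB].
Qed.

Lemma is_derive_pair_defect (a b : 'I_n) (s : R) : 0 < s ->
  is_derive s 1 (fun t => pair_defect (rho t) a b) (pair_defect_drift (rho s) a b).
Proof.
move=> s0; have da := rho_ode s0 a; have db := rho_ode s0 b.
rewrite /pair_defect /pair_defect_drift; case: (b < m)%N; first exact: is_deriveB.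
apply: is_derive_eq (is_deriveB (is_derive_cst gap s 1) (is_deriveB da db)) _.
by rewrite sub0r opprB.
Qed.

Lemma pair_defect_drift_le (x : 'I_n -> R) (B e : R) (a b : 'I_n) :
  (forall j, tth (x j) <= B) -> e <= gap ->
  (forall a' b' : 'I_n, (a' < m)%N -> pair_defect x a' b' <= e) ->
  (a < m)%N -> pair_defect x a b = e ->
  pair_defect_drift x a b <= kappa * (2 * B * e) *+ n.
Proof.
move=> tthB egap defect_le am defect_eq.
have cluster_close (a' b' : 'I_n) : (a' < m)%N -> (b' < m)%N -> x a' - x b' <= e.
  by move=> a'm b'm; have := defect_le a' b' a'm; rewrite /pair_defect b'm.
have gap_defect_le (a' k : 'I_n) : (a' < m)%N -> (m <= k)%N -> gap - (x a' - x k) <= e.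
  by move=> a'm km; have := defect_le a' k a'm; rewrite /pair_defect ltnNge km.
have tail_below (a' k : 'I_n) : (a' < m)%N -> (m <= k)%N -> x k <= x a'.
  by move=> a'm km; have := gap_defect_le a' k a'm km; lra.
have kappa_ge0 := ltW kappa_gt0.
have drift_le := drift_sub_cluster_le kappa_ge0 tth_ge0 tth_mono tthB cluster_close tail_below.
have drift_gap_le := drift_sub_gap_le kappa_ge0 tth_ge0 tth_mono tthB cluster_close tail_below.
move: defect_eq; rewrite /pair_defect_drift /pair_defect.
case: (ltnP b m) => bm defect_eq; first exact: drift_le.
apply: drift_gap_le => // k km.
by have := gap_defect_le a k am km; lra.
Qed.

Lemma pair_defect_lt (B T e : R) :
  0 <= B -> 0 <= T -> (forall t j, 0 <= t -> t <= T -> tth (rho t j) <= B) ->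
  0 < e -> e <= gap ->
  (forall a b : 'I_n, (a < m)%N -> pair_defect (rho 0) a b <= 0) ->
  forall a b : 'I_n, (a < m)%N -> pair_defect (rho T) a b < e.
Proof.
move=> B_ge0 T0 tthB e0 egap init a b am.
pose L := kappa * (2 * B) *+ n + 1.
have L_ge0 : 0 <= L.
  apply: addr_ge0 => //; apply: mulrn_wge0.
  by apply: mulr_ge0; [exact: ltW | apply: mulr_ge0].
pose phi t := e * expR (L * (t - T)).
have phi_gt0 t : 0 < phi t by rewrite mulr_gt0 ?expR_gt0.
have phi_le t : t <= T -> phi t <= e.
  move=> tT; rewrite /phi -[leRHS]mulr1 ler_pM2l // expR_le1.
  by apply: mulr_ge0_le0; rewrite ?subr_le0.
pose g (q : 'I_n * 'I_n) t := pair_defect (rho t) q.1 q.2 - phi t.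
have g_cont (q : 'I_n * 'I_n) : {within [set t | 0 <= t], continuous (g q)}.
  apply/subspace_continuousP => t t0; rewrite /from_subspace /g /=; apply: cvgB.
    exact: (subspace_continuousP _ _).1 (@continuous_pair_defect q.1 q.2) t t0.
  apply: cvg_within_filter; apply/differentiable_continuous/derivable1_diffP.
  exact: (@ex_derive _ _ _ _ _ _ _ (is_derive_scaled_expR e L T t)).
have g0 (q : 'I_n * 'I_n) : (q.1 < m)%N -> g q 0 < 0.
  by move=> q1m; have := init q.1 q.2 q1m; have := phi_gt0 0; rewrite /g; lra.
(* A defect touching the barrier grows at rate at most (L - 1) phi < phi' = L phi. *)
have escape s (q : 'I_n * 'I_n) : 0 < s -> s <= T ->
    (forall q' : 'I_n * 'I_n, (q'.1 < m)%N -> g q' s <= 0) ->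
    (q.1 < m)%N -> g q s = 0 -> exists2 d, is_derive s 1 (g q) d & d < 0.
  move=> s0 sT g_le0 q1m g_eq0.
  exists (pair_defect_drift (rho s) q.1 q.2 - phi s * L).
    exact: is_deriveB (is_derive_pair_defect q.1 q.2 s0) (is_derive_scaled_expR e L T s).
  have defect_le (a' b' : 'I_n) : (a' < m)%N -> pair_defect (rho s) a' b' <= phi s.
    by move=> a'm; have := g_le0 (a', b') a'm; rewrite /g; lra.
  have defect_eq : pair_defect (rho s) q.1 q.2 = phi s by move: g_eq0; rewrite /g; lra.
  have := pair_defect_drift_le (fun j => tthB s j (ltW s0) sT)
    (le_trans (phi_le s sT) egap) defect_le q1m defect_eq.
  have -> : kappa * (2 * B * phi s) *+ n = (L - 1) * phi s by rewrite /L; ring.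
  by have := phi_gt0 s; lra.
have := barrier_lt0 (P := [pred q : 'I_n * 'I_n | (q.1 < m)%N]) T0
  (fun q _ => g_cont q) g0 escape (i := (a, b)) am.
by rewrite /g /phi subrr mulr0 expR0 mulr1; lra.
Qed.

Theorem pair_defect_invariant :
  (forall a b : 'I_n, (a < m)%N -> pair_defect (rho 0) a b <= 0) ->
  forall t, 0 <= t -> forall a b : 'I_n, (a < m)%N -> pair_defect (rho t) a b <= 0.
Proof.
move=> init T T0 a b am.
have [M rhoM] : exists M, forall (j : 'I_n) t, 0 <= t -> t <= T -> rho t j <= M.
  exact: bounded_on_segment T0 (@rho_cont).
have tthM t j : 0 <= t -> t <= T -> tth (rho t j) <= tth M.
  by move=> t0 tT; apply: tth_mono; apply: rhoM.
apply: (le0_of_lt_small gap_gt0) => e e0 egap.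
exact: pair_defect_lt (tth_ge0 M) T0 tthM e0 egap init a b am.
Qed.

End ClusterInvariance.

Lemma tailmax_leP (R : realType) (n m : nat) (hmn : (m < n)%N) (x : 'I_n -> R) (c : R) :
  tailmax hmn x <= c <-> forall j : 'I_n, (m <= j)%N -> x j <= c.
Proof.
split; first by move/bigmax_leP => [_ x_le] j; exact: x_le.
by move=> x_le; apply/bigmax_leP; split; [exact: x_le | exact: x_le].
Qed.

Lemma le_tailmax (R : realType) (n m : nat) (hmn : (m < n)%N) (x : 'I_n -> R) (j : 'I_n) :
  (m <= j)%N -> x j <= tailmax hmn x.
Proof. exact: le_bigmax_cond. Qed.

Theorem mainTheorem3 (R : realType) (n m : nat) (kappa : R) (tth : R -> R)
  (rho : R -> 'I_n -> R)
  (hn : (2 <= n)%N) (hkappa : 0 < kappa)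
  (htth_nonneg : forall s, 0 <= tth s)
  (htth_lip : loc_lipschitz tth)
  (htth_mono : {homo tth : x y / x <= y})
  (htth_zero : forall s, s <= 0 -> tth s = 0)
  (htth_pos : forall s, 0 < s -> 0 < tth s)
  (hm1 : (1 <= m)%N) (hmn : (m < n)%N)
  (hcont : forall j : 'I_n,
      {within [set t : R | 0 <= t], continuous (fun t => rho t j)})
  (hode : forall (t : R), 0 < t -> forall j : 'I_n,
      is_derive t (1 : R) (fun s => rho s j)
        (kappa * \sum_(k < n) theta tth (rho t j) (rho t k) * (rho t j - rho t k)))
  (hsimplex : in_simplex (rho 0))
  (heq0 : forall i j : 'I_n, (i < m)%N -> (j < m)%N -> rho 0 i = rho 0 j)
  (hgap0 : forall i j : 'I_n, (i < m)%N -> (m <= j)%N -> rho 0 j < rho 0 i)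
  (hsorted0 : forall j k : 'I_n, (m <= j)%N -> (j <= k)%N -> rho 0 k <= rho 0 j) :
  (forall t : R, 0 <= t -> forall i j : 'I_n, (i < m)%N -> (j < m)%N ->
      rho t i = rho t j) /\
  (forall t : R, 0 <= t -> forall i : 'I_n, (i < m)%N ->
      rho t i - tailmax hmn (rho t) >= rho 0 i - tailmax hmn (rho 0)).
Proof.
pose i0 : 'I_n := Ordinal (ltn_trans hm1 hmn).
pose gap := rho 0 i0 - tailmax hmn (rho 0).
have cluster0 (i : 'I_n) : (i < m)%N -> rho 0 i = rho 0 i0 by move=> im; exact: heq0.
have gap_gt0 : 0 < gap.
  have : tailmax hmn (rho 0) <= rho 0 (Ordinal hmn).
    by apply/tailmax_leP => j jm; exact: hsorted0 (Ordinal hmn) j (leqnn m) jm.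
  by have := hgap0 i0 (Ordinal hmn) hm1 (leqnn m); rewrite /gap; lra.
have init (a b : 'I_n) : (a < m)%N -> pair_defect m gap (rho 0) a b <= 0.
  move=> am; rewrite /pair_defect; case: (ltnP b m) => bm.
    by rewrite (heq0 a b am bm) subrr.
  by have := le_tailmax hmn (rho 0) bm; rewrite /gap -(cluster0 a am); lra.
have inv := pair_defect_invariant hkappa htth_nonneg htth_mono gap_gt0 hcont hode init.
split=> [t t0 i j im jm | t t0 i im].
  by have := inv t t0 i j im; have := inv t t0 j i jm; rewrite /pair_defect im jm; lra.
have : tailmax hmn (rho t) <= rho t i - gap.
  apply/tailmax_leP => j jm; have := inv t t0 i j im; rewrite /pair_defect ltnNge jm /=.
  lra.
have -> : rho 0 i - tailmax hmn (rho 0) = gap by rewrite (cluster0 i im).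
lra.
Qed.
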